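(* Let $a,b,c,d$ be positive integers with $d<b\le c$ and $b\equiv c\pmod 2$, and let $s=\tfrac12 b+\tfrac12 c$. Then $$K_3:=\frac{s^{2s^2}}{b^{b^2}c^{c^2}}\cdot\frac{(a+s-d)^{2(a+s-d)^2}}{(a+b-d)^{(a+b-d)^2}(a+c-d)^{(a+c-d)^2}}\cdot\frac{(b-d)^{(b-d)^2}(c-d)^{(c-d)^2}}{(s-d)^{2(s-d)^2}}\cdot\frac{(a+b)^{(a+b)^2}(a+c)^{(a+c)^2}}{(a+s)^{2(a+s)^2}}\le 1,$$ with strict inequality unless $b=c$. Moreover, for positive integers $a,d,c$ with $d<c$, $$\frac{a^{a}d^{d}c^{c}(a+c-d)^{a+c-d}}{(a+d)^{a+d}(a+c)^{a+c}(c-d)^{c-d}}<1.$$ *)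

From mathcomp Require Import all_boot all_order all_algebra.
Set Implicit Arguments. Unset Strict Implicit. Unset Printing Implicit Defensive.
Import Order.TTheory GRing.Theory Num.Theory.
Local Open Scope ring_scope.

Definition Epow (x k : nat) : rat := (x%:Q) ^+ (k * x ^ 2)%N.

(* s = (b + c)/2 (exact when b = c mod 2). *)
Definition shalf (b c : nat) : nat := (b + c)./2.

Definition K3 (a b c d : nat) : rat :=
  let s := shalf b c in
  (Epow s 2 / (Epow b 1 * Epow c 1))
  * (Epow (a + s - d) 2 / (Epow (a + b - d) 1 * Epow (a + c - d) 1))
  * ((Epow (b - d) 1 * Epow (c - d) 1) / Epow (s - d) 2)
  * ((Epow (a + b) 1 * Epow (a + c) 1) / Epow (a + s) 2).

Definition selfpow (x : nat) : rat := (x%:Q) ^+ x.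

Definition K2 (a d c : nat) : rat :=
  (selfpow a * selfpow d * selfpow c * selfpow (a + c - d))
  / (selfpow (a + d) * selfpow (a + c) * selfpow (c - d)).

(* Both inequalities are proved by passing to logarithms.

   Part 1.  With g x = x^2 ln x we have ln K3 = -(Δ(s) + Δ(a+s-d)) + Δ(s-d)
   + Δ(a+s), where Δ x = g(x+e) + g(x-e) - 2 g(x) is the symmetric second
   difference of g of step e = (c - b)/2.  Writing u = s - d this is
   Δ u + Δ(u+a+d) - Δ(u+a) - Δ(u+d), i.e. the increment of Δ over a step d
   at u+a minus the same increment at u.  Since g'' = 2 ln x + 3 is concave,
   the second difference of g'' is nonpositive (negative when e > 0), so
   Δ' is nonincreasing (decreasing) and the increments of Δ decrease.

   Part 2.  With h x = x ln x, ln K2 is the sum of h a + h d - h (a+d) < 0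
   (superadditivity of h) and h c + h (a+c-d) - h (a+c) - h (c-d) <= 0
   (increments of the convex function h increase). *)

From Stdlib Require Import Reals Lra Lia.
From Coquelicot Require Import Coquelicot.
From mathcomp Require Import all_boot all_order all_algebra.
Import Order.TTheory GRing.Theory Num.Theory.
From mathcomp Require Import zify Rstruct.

Lemma is_derive_shift (f : R -> R) c x l :
  is_derive f (x + c) l -> is_derive (fun y => f (y + c)) x l.
Proof.
move=> hf; have := is_derive_comp f (fun y => y + c) x l 1 hf.
rewrite /scal /= /mult /= Rmult_1_l; apply; auto_derive; [done | ring].
Qed.

Section RayCalculus.
Local Open Scope R_scope.

Variables (F dF : R -> R) (lo : R).
Hypothesis F_deriv : forall z, lo < z -> is_derive F z (dF z).

Lemma mvt_ray x y : lo < x -> x < y ->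
  exists c, lo < c /\ F y - F x = dF c * (y - x).
Proof.
move=> hx hxy.
have [c [hc hF]] : exists c, Rmin x y <= c <= Rmax x y /\ F y - F x = dF c * (y - x).
  apply: MVT_gen; rewrite Rmin_left ?Rmax_right; try lra.
  - by move=> z hz; apply: F_deriv; lra.
  - move=> z hz; apply/continuity_pt_filterlim/ex_derive_continuous.
    by exists (dF z); apply: F_deriv; lra.
exists c; split; last exact: hF.
by move: hc; rewrite Rmin_left; lra.
Qed.

Lemma nonincreasing_of_deriv x y :
  (forall z, lo < z -> dF z <= 0) -> lo < x -> x <= y -> F y <= F x.
Proof.
move=> dF_le0 hx hxy; have [<-|hlt] := Req_dec x y; first lra.
have [c [hc hF]] := mvt_ray x y hx ltac:(lra).
by have := dF_le0 c hc; nra.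
Qed.

Lemma decreasing_of_deriv x y :
  (forall z, lo < z -> dF z < 0) -> lo < x -> x < y -> F y < F x.
Proof.
move=> dF_lt0 hx hxy; have [c [hc hF]] := mvt_ray x y hx hxy.
by have := dF_lt0 c hc; nra.
Qed.

End RayCalculus.

Section Increments.
Local Open Scope R_scope.

Variables (F dF : R -> R) (lo : R).
Hypothesis F_deriv : forall z, lo < z -> is_derive F z (dF z).

Lemma increment_deriv a x : 0 <= a -> lo < x ->
  is_derive (fun y => F (y + a) - F y) x (dF (x + a) - dF x).
Proof.
move=> ha hx; apply: (is_derive_minus (fun y => F (y + a))); last exact: F_deriv.
by apply/is_derive_shift/F_deriv; lra.
Qed.

Lemma increment_nonincreasing a x y :
  (forall z w, lo < z -> z <= w -> dF w <= dF z) ->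
  0 <= a -> lo < x -> x <= y -> F (y + a) - F y <= F (x + a) - F x.
Proof.
move=> dF_mono ha; apply: (nonincreasing_of_deriv (fun y => F (y + a) - F y)
  (fun y => dF (y + a) - dF y)).
- by move=> z hz; exact: increment_deriv.
- by move=> z hz; have := dF_mono z (z + a) hz ltac:(lra); lra.
Qed.

Lemma increment_decreasing a x y :
  (forall z w, lo < z -> z < w -> dF w < dF z) ->
  0 < a -> lo < x -> x < y -> F (y + a) - F y < F (x + a) - F x.
Proof.
move=> dF_mono ha; apply: (decreasing_of_deriv (fun y => F (y + a) - F y)
  (fun y => dF (y + a) - dF y)).
- by move=> z hz; apply: increment_deriv; lra.
- by move=> z hz; have := dF_mono z (z + a) hz ltac:(lra); lra.
Qed.

End Increments.

Section SecondDifference.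
Local Open Scope R_scope.

Definition sdiff (f : R -> R) (e x : R) : R := f (x + e) + f (x - e) - 2 * f x.

Lemma sdiff_deriv (f df : R -> R) e x :
  (forall z, 0 < z -> is_derive f z (df z)) -> 0 <= e -> e < x ->
  is_derive (sdiff f e) x (sdiff df e x).
Proof.
move=> f_deriv he hx; apply: is_derive_minus; last first.
  by apply: is_derive_scal; apply: f_deriv; lra.
by apply: is_derive_plus; apply: is_derive_shift; apply: f_deriv; lra.
Qed.

Definition g (x : R) : R := x ^ 2 * ln x.
Definition dg (x : R) : R := 2 * x * ln x + x.
Definition ddg (x : R) : R := 2 * ln x + 3.

Lemma g_deriv x : 0 < x -> is_derive g x (dg x).
Proof. by move=> hx; rewrite /g /dg; auto_derive; [lra | field; lra]. Qed.

Lemma dg_deriv x : 0 < x -> is_derive dg x (ddg x).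
Proof. by move=> hx; rewrite /dg /ddg; auto_derive; [lra | field; lra]. Qed.

(* ddg is concave, since (x + e)(x - e) <= x^2 and ln is increasing. *)
Lemma sdiff_ddg_nonpos e x : 0 <= e -> e < x -> sdiff ddg e x <= 0.
Proof.
move=> he hx; rewrite /sdiff /ddg.
have : ln ((x + e) * (x - e)) <= ln (x * x) by apply: ln_le; nra.
by rewrite !ln_mult; lra.
Qed.

Lemma sdiff_ddg_neg e x : 0 < e -> e < x -> sdiff ddg e x < 0.
Proof.
move=> he hx; rewrite /sdiff /ddg.
have : ln ((x + e) * (x - e)) < ln (x * x) by apply: ln_increasing; nra.
by rewrite !ln_mult; lra.
Qed.

Lemma sdiff_g_increment_le e x y a : 0 <= e -> e < x -> x <= y -> 0 <= a ->
  sdiff g e (y + a) - sdiff g e y <= sdiff g e (x + a) - sdiff g e x.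
Proof.
move=> he hx hxy ha; apply: (increment_nonincreasing (sdiff g e) (sdiff dg e) e) => //.
- by move=> z hz; exact: sdiff_deriv g_deriv he hz.
- move=> z w hz hzw; apply: (nonincreasing_of_deriv _ (sdiff ddg e) e) => //.
  + by move=> t ht; exact: sdiff_deriv dg_deriv he ht.
  + by move=> t ht; exact: sdiff_ddg_nonpos.
Qed.

Lemma sdiff_g_increment_lt e x y a : 0 < e -> e < x -> x < y -> 0 < a ->
  sdiff g e (y + a) - sdiff g e y < sdiff g e (x + a) - sdiff g e x.
Proof.
move=> he hx hxy ha; apply: (increment_decreasing (sdiff g e) (sdiff dg e) e) => //.
- by move=> z hz; apply: sdiff_deriv g_deriv _ hz; lra.
- move=> z w hz hzw; apply: (decreasing_of_deriv _ (sdiff ddg e) e) => //.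
  + by move=> t ht; apply: sdiff_deriv dg_deriv _ ht; lra.
  + by move=> t ht; exact: sdiff_ddg_neg.
Qed.

End SecondDifference.

Section LogInequalities.
Local Open Scope R_scope.

Definition logK3 (a b c d s : R) : R :=
  2 * g s - (g b + g c)
  + (2 * g (a + s - d) - (g (a + b - d) + g (a + c - d)))
  + (g (b - d) + g (c - d) - 2 * g (s - d))
  + (g (a + b) + g (a + c) - 2 * g (a + s)).

Lemma logK3_sdiff a b c d s : 2 * s = b + c ->
  logK3 a b c d s = sdiff g (s - b) (a + (s - d) + d) - sdiff g (s - b) (a + (s - d))
                    - (sdiff g (s - b) (s - d + d) - sdiff g (s - b) (s - d)).
Proof.
move=> hs; rewrite /logK3 /sdiff.
have -> : a + (s - d) + d = a + s by ring.
have -> : s - d + d = s by ring.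
have -> : a + (s - d) = a + s - d by ring.
have -> : a + s + (s - b) = a + c by lra.
have -> : a + s - (s - b) = a + b by ring.
have -> : s + (s - b) = c by lra.
have -> : s - (s - b) = b by ring.
have -> : a + s - d + (s - b) = a + c - d by lra.
have -> : a + s - d - (s - b) = a + b - d by ring.
have -> : s - d + (s - b) = c - d by lra.
have -> : s - d - (s - b) = b - d by ring.
ring.
Qed.

Lemma logK3_le0 a b c d s : 0 < a -> 0 < d -> d < b -> b <= c -> 2 * s = b + c ->
  logK3 a b c d s <= 0 /\ (b < c -> logK3 a b c d s < 0).
Proof.
move=> ha hd hdb hbc hs; rewrite logK3_sdiff //; split.
- by have := sdiff_g_increment_le (s - b) (s - d) (a + (s - d)) d; lra.
- by move=> hlt; have := sdiff_g_increment_lt (s - b) (s - d) (a + (s - d)) d; lra.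
Qed.

Definition h (x : R) : R := x * ln x.

Lemma h_superadditive x y : 0 < x -> 0 < y -> h x + h y < h (x + y).
Proof.
move=> hx hy; rewrite /h.
have := ln_increasing x (x + y) hx ltac:(lra).
have := ln_increasing y (x + y) hy ltac:(lra).
nra.
Qed.

(* h is convex (h' = ln + 1 is increasing), so its increments increase. *)
Lemma h_increment_le x y a : 0 < x -> x <= y -> 0 <= a ->
  h (x + a) - h x <= h (y + a) - h y.
Proof.
move=> hx hxy ha.
suff : - h (y + a) - - h y <= - h (x + a) - - h x by lra.
apply: (increment_nonincreasing (fun x => - h x) (fun x => - (ln x + 1)) 0) => //.
- by move=> z hz; rewrite /h; auto_derive; [lra | field; lra].
- by move=> z w hz hzw; have := ln_le z w hz hzw; lra.
Qed.

Definition logK2 (a d c : R) : R :=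
  h a + h d + h c + h (a + c - d) - (h (a + d) + h (a + c) + h (c - d)).

Lemma logK2_lt0 a d c : 0 < a -> 0 < d -> d < c -> logK2 a d c < 0.
Proof.
move=> ha hd hdc; rewrite /logK2.
have := h_superadditive a d ha hd.
have := h_increment_le (c - d) c a ltac:(lra) ltac:(lra) ltac:(lra).
have -> : c - d + a = a + c - d by ring.
have -> : c + a = a + c by ring.
lra.
Qed.

End LogInequalities.

Section Transfer.
Local Open Scope R_scope.

Variable f : {rmorphism rat -> R}.

Lemma embed_Epow x k : (0 < x)%N -> f (Epow x k) = exp (INR k * g (INR x)).
Proof.
move=> hx; have x_pos : 0 < INR x by apply: lt_0_INR; lia.
rewrite /Epow rmorphXn rmorph_nat -INRE -RpowE -(exp_ln (INR x ^ _)); last exact: pow_lt.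
by rewrite ln_pow // mult_INR -mulnn mult_INR /g /=; congr exp; ring.
Qed.

Lemma embed_selfpow x : (0 < x)%N -> f (selfpow x) = exp (h (INR x)).
Proof.
move=> hx; have x_pos : 0 < INR x by apply: lt_0_INR; lia.
rewrite /selfpow rmorphXn rmorph_nat -INRE -RpowE -(exp_ln (INR x ^ _)); last exact: pow_lt.
by rewrite ln_pow.
Qed.

Lemma embed_K3 a b c d : (0 < a)%N -> (0 < d)%N -> (d < b)%N -> (b <= c)%N ->
  (2 * shalf b c = b + c)%N ->
  f (K3 a b c d) = exp (logK3 (INR a) (INR b) (INR c) (INR d) (INR (shalf b c))).
Proof.
rewrite /K3; move: (shalf b c) => s ha hd hdb hbc hs /=.
rewrite !(rmorphM, fmorph_div, fmorphV) !embed_Epow; try lia.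
rewrite -!RinvE -!RmultE; repeat rewrite -(exp_Ropp, exp_plus); congr exp.
rewrite /logK3 !minus_INR ?plus_INR; try lia.
rewrite /=; ring.
Qed.

Lemma embed_K2 a d c : (0 < a)%N -> (0 < d)%N -> (d < c)%N ->
  f (K2 a d c) = exp (logK2 (INR a) (INR d) (INR c)).
Proof.
rewrite /K2 => ha hd hdc.
rewrite !(rmorphM, fmorph_div, fmorphV) !embed_selfpow; try lia.
rewrite -!RinvE -!RmultE; repeat rewrite -(exp_Ropp, exp_plus); congr exp.
rewrite /logK2 !minus_INR ?plus_INR; try lia.
ring.
Qed.

Lemma exp_le1 x : x <= 0 -> exp x <= 1.
Proof.
rewrite -exp_0 => /Rle_lt_or_eq_dec [/exp_increasing/Rlt_le // | ->].
exact: Rle_refl.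
Qed.

Lemma exp_logK3_le1 a b c d : (0 < a)%N -> (0 < d)%N -> (d < b)%N -> (b <= c)%N ->
  (2 * shalf b c = b + c)%N ->
  let L := logK3 (INR a) (INR b) (INR c) (INR d) (INR (shalf b c)) in
  exp L <= 1 /\ (b <> c -> exp L < 1).
Proof.
move=> ha hd hdb hbc hs L.
have hS : 2 * INR (shalf b c) = INR b + INR c.
  by have := f_equal INR hs; rewrite mult_INR plus_INR /=; lra.
have [L_le0 L_lt0] := logK3_le0 (INR a) (INR b) (INR c) (INR d) (INR (shalf b c))
  (lt_0_INR a ltac:(lia)) (lt_0_INR d ltac:(lia)) (lt_INR d b ltac:(lia))
  (le_INR b c ltac:(lia)) hS.
split; first exact: exp_le1.
by move=> b_neq_c; rewrite -exp_0; apply/exp_increasing/L_lt0/lt_INR; lia.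
Qed.

Lemma exp_logK2_lt1 a d c : (0 < a)%N -> (0 < d)%N -> (d < c)%N ->
  exp (logK2 (INR a) (INR d) (INR c)) < 1.
Proof.
move=> ha hd hdc; rewrite -exp_0; apply/exp_increasing/logK2_lt0.
- by apply: lt_0_INR; lia.
- by apply: lt_0_INR; lia.
- by apply: lt_INR; lia.
Qed.

End Transfer.

Local Open Scope ring_scope.

Lemma shalf_double b c : b = c %[mod 2] -> (2 * shalf b c = b + c)%N.
Proof.
move=> bc_mod2; have odd_bc : odd b = odd c.
  by move: bc_mod2; rewrite !modn2; case: (odd b); case: (odd c).
have := odd_double_half (b + c); rewrite oddD odd_bc addbb add0n /shalf; lia.
Qed.

Theorem mainTheorem8 :
  (forall a b c d : nat,
      (0 < a)%N -> (0 < b)%N -> (0 < c)%N -> (0 < d)%N ->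
      (d < b)%N -> (b <= c)%N -> b = c %[mod 2] ->
      K3 a b c d <= 1 /\ (b <> c -> K3 a b c d < 1))
  /\
  (forall a d c : nat,
      (0 < a)%N -> (0 < d)%N -> (0 < c)%N -> (d < c)%N ->
      K2 a d c < 1).
Proof.
split=> [a b c d ha _ _ hd hdb hbc bc_mod2 | a d c ha hd _ hdc].
- have hs := shalf_double b c bc_mod2.
  have [K3_le1 K3_lt1] := exp_logK3_le1 a b c d ha hd hdb hbc hs.
  rewrite -(ler_rat R) -(ltr_rat R) rmorph1 embed_K3 //.
  by split=> [|b_neq_c]; [apply/RleP | apply/RltP/K3_lt1].
- by rewrite -(ltr_rat R) rmorph1 embed_K2 //; apply/RltP/exp_logK2_lt1.
Qed.
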